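(* Let $U:\mathbb{C}^*\to\mathbb{C}$ be a reasonable expansion with unique restrictions between locally small categories, and assume that all morphisms in $\mathbb{C}$ are monomorphisms. Then for every $A\in\mathrm{Ob}(\mathbb{C})$, $$t_{\mathbb{C}}(A)\le\sum_{\mathcal{A}\in U^{-1}(A)}t_{\mathbb{C}^*}(\mathcal{A}).$$ Consequently, if $U^{-1}(A)$ is finite and $t_{\mathbb{C}^*}(\mathcal{A})<\infty$ for all $\mathcal{A}\in U^{-1}(A)$, then $t_{\mathbb{C}}(A)<\infty$.
   Context: An expansion of $\mathbb{C}$ is a category $\mathbb{C}^*$ with a functor $U:\mathbb{C}^*\to\mathbb{C}$ surjective on objects and injective on hom-sets; we regard $\hom_{\mathbb{C}^*}(\mathcal{A},\mathcal{B})\subseteq\hom_{\mathbb{C}}(U\mathcal{A},U\mathcal{B})$, and $U^{-1}(A)=\{\mathcal{A}:U(\mathcal{A})=A\}$. $U$ is reasonable if for every $e\in\hom(A,B)$ and $\mathcal{A}\in U^{-1}(A)$ there is $\mathcal{B}\in U^{-1}(B)$ with $e\in\hom(\mathcal{A},\mathcal{B})$; it has unique restrictions if for every $\mathcal{B}\in\mathrm{Ob}(\mathbb{C}^* )$ and $e\in\hom(A,U(\mathcal{B}))$ there is exactly one $\mathcal{A}\in U^{-1}(A)$ with $e\in\hom(\mathcal{A},\mathcal{B})$. In a category $\mathbb{D}$: $C\to(B)^A_{k,t}$ means that for every $\chi:\hom(A,C)\to\{0,\dots,k-1\}$ there is $w\in\hom(B,C)$ with $|\chi(w\cdot\hom(A,B))|\le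 t$; $t_{\mathbb{D}}(A)$ is the least positive $n$ such that for all $k\ge2$ and all $B$ there is $C$ with $C\to(B)^A_{k,n}$, and $\infty$ otherwise. A sum with an infinite term or infinitely many terms is $\infty$. *)

From mathcomp Require Import all_boot.
From mathcomp Require Import boolp.
Set Implicit Arguments. Unset Strict Implicit. Unset Printing Implicit Defensive.

Unset Implicit Arguments.
Record Category := {
  Ob : Type;
  hom : Ob -> Ob -> Type;
  idm : forall A, hom A A;
  comp : forall A B C, hom B C -> hom A B -> hom A C;
  comp_assoc : forall A B C D (f : hom A B) (g : hom B C) (h : hom C D),
      comp A C D h (comp A B C g f) = comp A B D (comp B C D h g) f;
  comp_id_l : forall A B (f : hom A B), comp A B B (idm B) f = f;
  comp_id_r : forall A B (f : hom A B), comp A A B f (idm A) = f }.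

Arguments hom {c} _ _.
Arguments idm {c} A.
Arguments comp {c A B C} g f.

Definition all_monos (D : Category) : Prop :=
  forall (A B C : Ob D) (f : hom B C) (g h : hom A B), comp f g = comp f h -> g = h.

(* Following the paper's convention hom_{C*}(X,Y) ⊆ hom_C(U X, U Y), an
   expansion is given by a type of objects, an object map U, and for each
   pair of objects the subset of C-morphisms that are C*-morphisms; this
   makes U injective on hom-sets by construction. *)
Record Expansion (C : Category) := {
  eOb : Type;
  eU : eOb -> Ob C;
  ehom : forall X Y : eOb, hom (eU X) (eU Y) -> Prop;
  ehom_id : forall X, ehom X X (idm (eU X));
  ehom_comp : forall X Y Z (f : hom (eU X) (eU Y)) (g : hom (eU Y) (eU Z)),
      ehom X Y f -> ehom Y Z g -> ehom X Z (@comp C _ _ _ g f);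
  eU_surj : forall A : Ob C, exists X : eOb, eU X = A }.

Set Implicit Arguments.
Arguments eOb {C} e.
Arguments eU {C} e _.
Arguments ehom_id {C} e X.
Arguments ehom {C} e X Y _.
Arguments ehom_comp {C} e {X Y Z f g}.

Section ExpCat.
Variables (C : Category) (E : Expansion C).

Definition ehomT (X Y : eOb E) := {f : hom (eU E X) (eU E Y) | ehom E X Y f}.

Definition ecomp (X Y Z : eOb E) (g : ehomT Y Z) (f : ehomT X Y) : ehomT X Z :=
  exist _ (comp (proj1_sig g) (proj1_sig f))
        (ehom_comp E (proj2_sig f) (proj2_sig g)).

Definition eidm (X : eOb E) : ehomT X X := exist _ (idm (eU E X)) (ehom_id E X).

Lemma ehomT_eq X Y (f g : ehomT X Y) : proj1_sig f = proj1_sig g -> f = g.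
Proof.
case: f => f pf; case: g => g pg /= efg; subst g.
by rewrite (Prop_irrelevance pf pg).
Qed.

Lemma ecomp_assoc X Y Z W (f : ehomT X Y) (g : ehomT Y Z) (h : ehomT Z W) :
  ecomp h (ecomp g f) = ecomp (ecomp h g) f.
Proof. by apply: ehomT_eq; rewrite /= comp_assoc. Qed.

Lemma ecomp_id_l X Y (f : ehomT X Y) : ecomp (eidm Y) f = f.
Proof. by apply: ehomT_eq; rewrite /= comp_id_l. Qed.

Lemma ecomp_id_r X Y (f : ehomT X Y) : ecomp f (eidm X) = f.
Proof. by apply: ehomT_eq; rewrite /= comp_id_r. Qed.

Definition ExpCategory : Category :=
  {| Ob := eOb E; hom := ehomT; idm := eidm; comp := ecomp;
     comp_assoc := ecomp_assoc; comp_id_l := ecomp_id_l;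
     comp_id_r := ecomp_id_r |}.
End ExpCat.

Definition reasonable (C : Category) (E : Expansion C) : Prop :=
  forall (X : eOb E) (B : Ob C) (e : hom (eU E X) B),
    exists Y : eOb E, exists H : B = eU E Y,
      ehom E X Y (eq_rect B (fun b => hom (eU E X) b) e (eU E Y) H).

Definition restricts (C : Category) (E : Expansion C) (A : Ob C) (Y : eOb E)
  (e : hom A (eU E Y)) (X : eOb E) : Prop :=
  exists H : A = eU E X, ehom E X Y (eq_rect A (fun a => hom a (eU E Y)) e (eU E X) H).

Definition unique_restrictions (C : Category) (E : Expansion C) : Prop :=
  forall (Y : eOb E) (A : Ob C) (e : hom A (eU E Y)),
    exists X : eOb E, restricts e X /\ forall X', restricts e X' -> X' = X.

Definition fibre (C : Category) (E : Expansion C) (A : Ob C) : Type :=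
  {X : eOb E | eU E X = A}.

Definition arrow (D : Category) (Cc B A : Ob D) (k t : nat) : Prop :=
  forall chi : hom A Cc -> 'I_k, exists w : hom B Cc,
    #|[set c : 'I_k | `[< exists f : hom A B, chi (comp w f) = c >]]| <= t.

Definition has_degree (D : Category) (A : Ob D) (n : nat) : Prop :=
  0 < n /\ forall k : nat, 2 <= k -> forall B : Ob D, exists Cc : Ob D, arrow Cc B A k n.

Inductive enat := Fin of nat | Inf.

Definition enat_le (x y : enat) : Prop :=
  match x, y with
  | _, Inf => True
  | Inf, Fin _ => False
  | Fin m, Fin n => m <= n
  end.

Definition eadd (x y : enat) : enat :=
  match x, y with Fin m, Fin n => Fin (m + n) | _, _ => Inf end.

Definition ramsey_degree (D : Category) (A : Ob D) : enat :=
  match pselect (exists n, has_degree A n) with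
  | left H =>
      Fin (@ex_minn (fun n => `[< has_degree A n >])
             (let (n, Hn) := H in ex_intro _ n (asboolT Hn)))
  | right _ => Inf
  end.

Definition finite_type (I : Type) : Prop :=
  exists n : nat, exists e : 'I_n -> I, bijective e.

(* sum over a type of extended naturals: infinite if the index type is
   infinite or if some term is infinite *)
Definition enat_sum (I : Type) (F : I -> enat) : enat :=
  match pselect (finite_type I) with
  | left H =>
      let (n, Hn) := cid H in
      let (e, _) := cid Hn in
      \big[eadd/Fin 0]_(i < n) F (e i)
  | right _ => Inf
  end.

(* Enumerate the fibre of A as X_1, ..., X_n, with Ramsey degrees d_1, ..., d_n.
   Given B, fix any expansion B' of B and, iterating the Ramsey property of
   the X_i, build C' such that every colouring of hom(A, U C') admits
   w : B' -> C' for which, for each i, the maps w . f with f : X_i -> B' take at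
   most d_i colours altogether. By unique restrictions every f : A -> B lies in
   hom(X_i, B') for some i, so at most d_1 + ... + d_n colours occur on
   w . hom(A, B). *)
From Pilot Require Import Defs.
From mathcomp Require Import all_boot.
From mathcomp Require Import boolp.

Lemma ramsey_degree_le {D : Category} {A : Ob D} {m : nat} :
  has_degree A m -> enat_le (ramsey_degree A) (Fin m).
Proof.
move=> degA; rewrite /ramsey_degree; case: pselect => [ex|]; last first.
  by case; exists m.
by case: ex_minnP => m' _; apply; apply/asboolP.
Qed.

Lemma has_degree_ramsey_degree {D : Category} {A : Ob D} {m : nat} :
  ramsey_degree A = Fin m -> has_degree A m.
Proof.
rewrite /ramsey_degree; case: pselect => // ex.
by case: ex_minnP => m' /asboolP degA _ [<-].
Qed.

Lemma big_eadd_Inf {I : eqType} {s : seq I} {F : I -> enat} {i : I} :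
  i \in s -> F i = Inf -> \big[eadd/Fin 0]_(j <- s) F j = Inf.
Proof.
elim: s => // j s IHs; rewrite in_cons big_cons => /orP [/eqP <- -> //|s_i Fi].
by rewrite IHs //; case: (F j).
Qed.

Lemma enat_sum_le {I : Type} (F : I -> enat) (x : enat) :
  (forall n (e : 'I_n -> I) (d : 'I_n -> nat), bijective e ->
     (forall i, F (e i) = Fin (d i)) -> enat_le x (Fin (\sum_(i < n) d i))) ->
  enat_le x (enat_sum F).
Proof.
move=> le_x; rewrite /enat_sum; case: pselect => [fin|_]; last by case: (x).
case: (cid fin) => n en; case: (cid en) => e e_bij.
have [[i Fi]|all_fin] := pselect (exists i, F (e i) = Inf).
  by rewrite (big_eadd_Inf (mem_index_enum i) Fi); case: (x).
pose d i := if F (e i) is Fin m then m else 0.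
have Fd i : F (e i) = Fin (d i).
  by rewrite /d; case Fi: (F (e i)) => //; case: all_fin; exists i.
under eq_bigr do rewrite Fd.
rewrite -(big_morph Fin (id2 := 0) (op2 := addn)) //.
exact: le_x Fd.
Qed.

Lemma enat_sum_neq_Inf {I : Type} (F : I -> enat) :
  finite_type I -> (forall i, F i <> Inf) -> enat_sum F <> Inf.
Proof.
move=> fin F_fin; rewrite /enat_sum; case: pselect => // fin'.
case: (cid fin') => n en; case: (cid en) => e _.
by apply: (big_ind (fun x => x <> Inf)) => // -[a|] [b|].
Qed.

Section Colours.
Context {D : Category}.

Definition colours {A B Cc : Ob D} {k : nat} (chi : hom A Cc -> 'I_k)
    (w : hom B Cc) : {set 'I_k} :=
  [set c | `[< exists f : hom A B, chi (Defs.comp w f) = c >]].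

Lemma colours_comp (A B B' Cc : Ob D) k (chi : hom A Cc -> 'I_k)
    (w : hom B Cc) (v : hom B' B) :
  colours chi (Defs.comp w v) = colours (fun f => chi (Defs.comp w f)) v.
Proof.
apply/setP => c; rewrite !inE.
by apply/asboolP/asboolP => -[f <-]; exists f; rewrite comp_assoc.
Qed.

Lemma colours_compS (A B B' Cc : Ob D) k (chi : hom A Cc -> 'I_k)
    (w : hom B Cc) (v : hom B' B) :
  colours chi (Defs.comp w v) \subset colours chi w.
Proof.
apply/subsetP => c; rewrite !inE => /asboolP [f <-].
by apply/asboolP; exists (Defs.comp v f); rewrite comp_assoc.
Qed.

Lemma arrow_bigcup {I : Type} {A_ : I -> Ob D} {d : I -> nat} :
  (forall i, has_degree (A_ i) (d i)) ->
  forall k, 2 <= k -> forall (s : seq I) (B : Ob D),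
  exists Cc : Ob D, forall chi : forall i, hom (A_ i) Cc -> 'I_k,
    exists w : hom B Cc,
      #|\bigcup_(i <- s) colours (chi i) w| <= \sum_(i <- s) d i.
Proof.
move=> deg k k_ge2; elim=> [|i s IHs] B.
  exists B => chi; exists (idm B).
  by rewrite big_nil cards0.
have [C' arrowC'] := IHs B.
have [Cc arrowCc] := (deg i).2 k k_ge2 C'.
exists Cc => chi.
have [w1 col_w1] := arrowCc (chi i).
have [w' col_w'] := arrowC' (fun j f => chi j (Defs.comp w1 f)).
exists (Defs.comp w1 w'); rewrite !big_cons.
apply: leq_trans (leq_add col_w1 col_w').
apply: leq_trans (leq_card_setU _ _); apply: subset_leq_card.
apply: setUSS; first exact: colours_compS.
by under eq_bigr do rewrite colours_comp.
Qed.

End Colours.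

Section Fibre.
Context {C : Category} {E : Expansion C} {A : Ob C}.

Definition fibre_cast (x : fibre E A) {B : Ob C} (f : hom (eU E (sval x)) B) :
  hom A B :=
  eq_rect _ (fun a => hom a B) f A (proj2_sig x).

Lemma fibre_cast_comp (x : fibre E A) (B B' : Ob C) (g : hom B B')
    (f : hom (eU E (sval x)) B) :
  fibre_cast x (Defs.comp g f) = Defs.comp g (fibre_cast x f).
Proof. by case: x f => X /= UX f; rewrite /fibre_cast /=; case: A / UX. Qed.

Lemma restriction_in_fibre (ur : unique_restrictions E) {Y : eOb E}
    (f : hom A (eU E Y)) :
  exists x : fibre E A, exists g : ehomT (sval x) Y, fibre_cast x (sval g) = f.
Proof.
have [X [[UX gX] _]] := ur Y A f.
exists (exist _ X (esym UX)), (exist _ _ gX).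
by rewrite /fibre_cast /=; case: _ / UX {gX}.
Qed.

Lemma has_degree_fibre_sum (ur : unique_restrictions E) {n : nat}
    {e : 'I_n -> fibre E A} {einv : fibre E A -> 'I_n} {d : 'I_n -> nat} :
  cancel einv e ->
  (forall i, has_degree (D := ExpCategory E) (sval (e i)) (d i)) ->
  has_degree A (\sum_(i < n) d i).
Proof.
move=> eK deg; split.
  have [X0 UX0] := eU_surj _ E A.
  rewrite (bigD1 (einv (exist _ X0 UX0))) //=.
  exact: leq_trans (deg _).1 (leq_addr _ _).
move=> k k_ge2 B; have [Bs <-] := eU_surj _ E B.
have [Cs arrowCs] := arrow_bigcup deg k k_ge2 (index_enum 'I_n) Bs.
exists (eU E Cs) => chi.
have [w col_w] := arrowCs (fun i g => chi (fibre_cast (e i) (sval g))).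
exists (sval w); apply: leq_trans col_w; apply: subset_leq_card.
apply/subsetP => c; rewrite inE => /asboolP [f <-].
have [x [g <-]] := restriction_in_fibre ur f.
apply/bigcupP; exists (einv x) => //; rewrite eK inE.
by apply/asboolP; exists g; rewrite /= fibre_cast_comp.
Qed.

End Fibre.

Theorem theorem6p1 (C : Category) (E : Expansion C) :
  reasonable E -> unique_restrictions E -> all_monos C ->
  forall A : Ob C,
    enat_le (ramsey_degree A)
            (enat_sum (fun X : fibre E A => ramsey_degree (D := ExpCategory E) (proj1_sig X)))
    /\ (finite_type (fibre E A) ->
        (forall X : fibre E A, ramsey_degree (D := ExpCategory E) (proj1_sig X) <> Inf) ->
        ramsey_degree A <> Inf).
Proof.
move=> _ ur _ A.
have le_sum : enat_le (ramsey_degree A)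
    (enat_sum (fun X : fibre E A => ramsey_degree (D := ExpCategory E) (sval X))).
  apply: enat_sum_le => n e d [einv _ eK] Fd.
  apply/ramsey_degree_le/(has_degree_fibre_sum ur eK) => i.
  exact: has_degree_ramsey_degree.
split=> // fin all_fin; move: le_sum (enat_sum_neq_Inf _ fin all_fin).
by case: ramsey_degree; case: enat_sum.
Qed.
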